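(* Let $S=[\alpha+1,\alpha+m]^\circ$ be a cyclic interval of $[n]$ and let $r<m$. Set $S^\vee=[n]\setminus S$ (the cyclic interval $[\alpha+m+1,\alpha]^\circ$) and $r^\vee=n-k-m+r$. Then $\varphi(X_{S\le r})=X_{S^\vee\le r^\vee}$, where $X_{S\le r}\subseteq\mathrm{Gr}(k,n)$ and $X_{S^\vee\le r^\vee}\subseteq\mathrm{Gr}(n-k,n)$.
   Context: Let $\Bbbk$ be algebraically closed of characteristic $0$, $1\le k<n$. For $0\le\alpha\le n-1$ and $1\le m<n$, $[\alpha+1,\alpha+m]^\circ$ is $\{\alpha+1,\dots,\alpha+m\}$ reduced modulo $n$ into $[n]$. For $S\subseteq[n]$, $r\ge0$ and $p\in\{k,n-k\}$, $X_{S\le r}\subseteq\mathrm{Gr}(p,n)$ is the set of $p$-planes $V$ such that the columns indexed by $S$ of a $p\times n$ matrix with row span $V$ have rank $\le r$. $\varphi:\mathrm{Gr}(k,n)\to\mathrm{Gr}(n-k,n)$ is the isomorphism given in Plücker coordinates by $[\mathbf a]\mapsto[[n]\setminus\mathbf a]$, i.e. the $([n]\setminus\mathbf a)$-Plücker coordinate of $\varphi(V)$ equals the $\mathbf a$-Plücker coordinate of $V$ (this stratification-preserving isomorphism agrees, up to rescaling columns by signs, with $V\mapsto V^\perp$). *)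

From HB Require Import structures.
From mathcomp Require Import all_boot all_order all_algebra.
Set Implicit Arguments. Unset Strict Implicit. Unset Printing Implicit Defensive.
Import GRing.Theory Num.Theory.
Local Open Scope ring_scope.

(* Indices: [n] = {1..n} is modelled by 'I_n = {0..n-1} (shift by one). *)

(* Cyclic interval [alpha+1, alpha+m]° of [n], in 0-based indexing:
   { (alpha + j) mod n | j < m }. *)
Definition cyc_interval (n alpha m : nat) : {set 'I_n} :=
  [set i : 'I_n | [exists j : 'I_m, (nat_of_ord i == (alpha + j) %% n)%N]].

Definition colS (F : fieldType) (p n : nat) (A : 'M[F]_(p, n)) (S : {set 'I_n})
  : 'M[F]_(p, #|S|) := \matrix_(i < p, j < #|S|) A i (enum_val j).

(* X_{S <= r}: the row span of the (full-rank) p x n matrix A lies in X_{S<=r}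
   iff the columns indexed by S have rank <= r. *)
Definition inX (F : fieldType) (p n : nat) (S : {set 'I_n}) (r : int)
  (A : 'M[F]_(p, n)) : Prop := ((\rank (colS A S))%:Z <= r)%R.

Definition pluck (F : fieldType) (p n : nat) (A : 'M[F]_(p, n)) (a : {set 'I_n}) : F :=
  \det (\matrix_(i < p, j < p) nth 0 [seq A i c | c <- enum a] j).

(* phi_rel A B : the point of Gr(n-k,n) spanned by B equals phi of the point of
   Gr(k,n) spanned by A, i.e. the ([n]\a)-Plücker coordinate of B equals the
   a-Plücker coordinate of A, up to a common nonzero scalar (projective coords). *)
Definition phi_rel (F : fieldType) (k n : nat) (A : 'M[F]_(k, n))
  (B : 'M[F]_(n - k, n)) : Prop :=
  exists2 c : F, c != 0 &
    forall a : {set 'I_n}, #|a| = k -> pluck B (~: a) = c * pluck A a.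

(* Let the rows of [B] span the orthogonal complement of the row space of [A].
   As [A *m B^T = 0], the product of [col_mx A C] with [(col_mx D B)^T] is
   block triangular, and Jacobi's complementary-minor identity follows: the
   Plücker coordinate of [B] at [~: a] is that of [A] at [a] times a constant
   times the determinant of the shuffle matrix of [(a, ~: a)].  Moving an
   element of [a] down by one changes the sign of that determinant and of
   [(-1) ^+ (sum of a)], so rescaling column [i] of [B] by [(-1) ^+ i] yields
   phi of the row space of [A].  Column rescaling preserves the ranks of
   column submatrices, and [rank B_T + #|~: T| = (n - k) + rank A_(~: T)]
   exchanges [rank A_S <= r] and [rank B_(~: S) <= n - k - m + r]. *)

From HB Require Import structures.
From mathcomp Require Import all_boot all_order all_algebra.
From mathcomp Require Import perm zify ring.
Set Implicit Arguments. Unset Strict Implicit. Unset Printing Implicit Defensive.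
Import GRing.Theory.
Local Open Scope ring_scope.

(* Row [j] of [selmx p a] is the unit vector at the [j]-th element of [a],
   in increasing order: [A *m (selmx p a)^T] lists the columns of [A] in [a]. *)
Definition selmx (F : fieldType) p n (a : {set 'I_n}) : 'M[F]_(p, n) :=
  \matrix_(j < p, i < n) ((i \in a) && (index i (enum a) == j))%:R.
Arguments selmx {F} p {n} a.

Section SelectionMatrices.

Variable F : fieldType.

Lemma sum_index_nth (T : eqType) (s : seq T) (f : T -> F) (j : nat) :
  uniq s -> \sum_(c <- s) f c * (index c s == j)%:R = nth 0 (map f s) j.
Proof.
elim: s j => [|x s IH] j /=; first by rewrite big_nil nth_nil.
case/andP=> xs us; rewrite big_cons eqxx.
have xNc c : c \in s -> (x == c) = false.
  by move=> cs; apply: contraNF xs => /eqP ->.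
case: j => [|j] /=.
  by rewrite mulr1 big1_seq ?addr0 // => c /= cs; rewrite xNc ?mulr0.
by rewrite mulr0 add0r -IH //; apply: eq_big_seq => c cs; rewrite xNc.
Qed.

Lemma mul_selmx_tr p' p n (A : 'M[F]_(p', n)) (a : {set 'I_n}) :
  A *m (selmx p a)^T = \matrix_(i < p', j < p) nth 0 [seq A i c | c <- enum a] j.
Proof.
apply/matrixP=> i j; rewrite !mxE -(sum_index_nth (A i) j (enum_uniq (mem a))).
rewrite big_enum /= [RHS]big_mkcond /=; apply: eq_bigr => c _; rewrite !mxE.
by case: (c \in a); rewrite ?mulr0.
Qed.

Lemma pluckE p n (A : 'M[F]_(p, n)) a : pluck A a = \det (A *m (selmx p a)^T).
Proof. by rewrite mul_selmx_tr. Qed.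

Lemma colSE p n (A : 'M[F]_(p, n)) T : colS A T = A *m (selmx #|T| T)^T.
Proof.
rewrite mul_selmx_tr; apply/matrixP=> i j; rewrite !mxE.
rewrite (nth_map (enum_val j)) -?cardE //; congr (A i _).
by apply: set_nth_default; rewrite -cardE.
Qed.

Lemma nth_map_enum n (a : {set 'I_n}) (f : 'I_n -> F) (j : nat) : (j < #|a|)%N ->
  exists x, [/\ x \in a, index x (enum a) = j & nth 0 [seq f c | c <- enum a] j = f x].
Proof.
rewrite cardE; case e: (enum a) => [|x0 s] //; rewrite -e => jl.
exists (nth x0 (enum a) j); split; first by rewrite -mem_enum mem_nth.
  by rewrite index_uniq // enum_uniq.
by rewrite (nth_map x0).
Qed.

Lemma nth_map_enum_default n (a : {set 'I_n}) (f : 'I_n -> F) (j : nat) :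
  (#|a| <= j)%N -> nth 0 [seq f c | c <- enum a] j = 0.
Proof. by move=> h; rewrite nth_default // size_map -cardE. Qed.

Lemma selmx_mul_tr1 p n (a : {set 'I_n}) :
  #|a| = p -> selmx p a *m (selmx p a)^T = 1%:M :> 'M[F]_p.
Proof.
move=> ha; apply/matrixP=> j j'; rewrite mul_selmx_tr !mxE.
have j'a : (j' < #|a|)%N by rewrite ha.
have [x [xa ix ->]] := nth_map_enum ((selmx p a : 'M[F]_(p, n)) j) j'a.
by rewrite !mxE xa ix /= eq_sym.
Qed.

Lemma selmx_mul_tr0 p q n (a b : {set 'I_n}) :
  a :&: b = set0 -> selmx p a *m (selmx q b)^T = 0 :> 'M[F]_(p, q).
Proof.
move=> ab0; apply/matrixP=> j j'; rewrite mul_selmx_tr !mxE.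
have [jb|] := ltnP j' #|b|; last exact: nth_map_enum_default.
have [x [xb _ ->]] := nth_map_enum ((selmx p a : 'M[F]_(p, n)) j) jb.
by rewrite !mxE; case xa: (x \in a) => //=; move: (in_set0 x); rewrite -ab0 inE xa xb.
Qed.

Lemma selmx_tr_mulE p n (a : {set 'I_n}) i i' : #|a| = p ->
  ((selmx p a)^T *m selmx p a) i i' = ((i \in a) && (i == i'))%:R :> F.
Proof.
move=> ha; rewrite !mxE.
case ia: (i \in a) => /=; last by rewrite big1 // => j _; rewrite !mxE ia mul0r.
have il : (index i (enum a) < p)%N by rewrite -ha cardE index_mem mem_enum.
rewrite (bigD1 (Ordinal il)) //= big1 ?addr0 => [|j ji]; last first.
  rewrite !mxE ia /=; case: eqP => [e|]; last by rewrite mul0r.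
  by case/eqP: ji; apply: val_inj; rewrite /= e.
rewrite !mxE ia eqxx mul1r; case ia': (i' \in a) => /=.
  by rewrite (inj_in_eq (index_inj i (s := enum a))) ?mem_enum // eq_sym.
by case: eqP => // e; rewrite -e ia in ia'.
Qed.

Lemma selmx_tr_mul_addC n (a : {set 'I_n}) :
  (selmx #|a| a)^T *m selmx #|a| a + (selmx #|~: a| (~: a))^T *m selmx #|~: a| (~: a)
  = 1%:M :> 'M[F]_n.
Proof.
apply/matrixP=> i i'; rewrite mxE !selmx_tr_mulE // inE !mxE.
by case: (i \in a); rewrite /= ?addr0 ?add0r.
Qed.

Lemma row_free_selmx p n (a : {set 'I_n}) : #|a| = p -> row_free (selmx p a : 'M[F]_(p, n)).
Proof.
move=> ha; rewrite /row_free eqn_leq rank_leq_row /=.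
by rewrite -{1}(mxrank1 F p) -(selmx_mul_tr1 ha) mxrankM_maxl.
Qed.

Lemma row_sub_selmx_mul p n m (a : {set 'I_n}) (N : 'M[F]_(n, m)) x :
  #|a| = p -> x \in a -> (row x N <= selmx p a *m N)%MS.
Proof.
move=> ha xa; have xl : (index x (enum a) < p)%N by rewrite -ha cardE index_mem mem_enum.
suff -> : row x N = row (Ordinal xl) (selmx p a *m N) by exact: row_sub.
rewrite row_mul [LHS]rowE; congr (_ *m _); apply/matrixP=> z c; rewrite !mxE (ord1 z) eqxx /=.
case ca: (c \in a) => /=.
  by rewrite (inj_in_eq (index_inj x (s := enum a))) ?mem_enum // eq_sym.
by case: eqP => // cx; rewrite cx xa in ca.
Qed.

End SelectionMatrices.

Section ColumnMinors.

Variable F : fieldType.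

Lemma row_free_pluck_neq0 p n (M : 'M[F]_(p, n)) :
  row_free M -> exists2 a : {set 'I_n}, #|a| = p & pluck M a != 0.
Proof.
move=> fM; have rM : \rank M^T = p by rewrite mxrank_tr (eqP fM).
pose f := maxrankfun M^T; pose a := [set f j | j : 'I_(\rank M^T)].
have ha : #|a| = p by rewrite card_imset ?card_ord //; apply: maxrankfun_inj.
exists a => //; set X := selmx p a *m M^T.
have sub : (rowsub f M^T <= X)%MS.
  by apply/row_subP => j; rewrite row_rowsub row_sub_selmx_mul // imset_f.
have fX : row_free X.
  by rewrite /row_free eqn_leq rank_leq_row -{1}rM -(eqP (maxrowsub_free M^T)) mxrankS.
by rewrite pluckE -det_tr trmx_mul trmxK -unitfE -unitmxE -row_free_unit.
Qed.

Lemma row_free_diag_mx k (d : 'I_k -> F) :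
  (forall i, d i != 0) -> row_free (diag_mx (\row_i d i)).
Proof.
move=> d_neq0; rewrite row_free_unit unitmxE det_diag unitfE.
by apply/prodf_neq0 => i _; rewrite mxE.
Qed.

Lemma pluck_mul_diag p n (M : 'M[F]_(p, n)) (d : 'I_n -> F) (a : {set 'I_n}) :
  #|a| = p ->
  pluck (M *m diag_mx (\row_i d i)) a = pluck M a * \prod_(i in a) d i.
Proof.
move=> ha; pose d' := \row_(j < p) nth 0 [seq d c | c <- enum a] j.
have diag_selmx : diag_mx (\row_i d i) *m (selmx p a)^T = (selmx p a)^T *m diag_mx d'.
  apply/matrixP=> i j; rewrite mul_diag_mx mul_mx_diag !mxE.
  case ia: (i \in a); rewrite /= ?mulr0 ?mul0r //.
  case: eqP => [<-|_]; rewrite ?mulr0 ?mul0r // mulr1 mul1r.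
  by rewrite (nth_map i) ?nth_index ?index_mem ?mem_enum.
rewrite !pluckE -mulmxA diag_selmx mulmxA det_mulmx det_diag; congr (_ * _).
have -> : \prod_(i in a) d i = \prod_(x <- [seq d c | c <- enum a]) x.
  by rewrite big_map big_enum.
rewrite (big_nth 0) size_map -cardE ha big_mkord.
by apply: eq_bigr => j _; rewrite mxE.
Qed.

Lemma rank_colS_mul_diag p n (M : 'M[F]_(p, n)) (d : 'I_n -> F) T :
  (forall i, d i != 0) -> \rank (colS (M *m diag_mx (\row_i d i)) T) = \rank (colS M T).
Proof.
move=> d_neq0.
have -> : colS (M *m diag_mx (\row_i d i)) T = colS M T *m diag_mx (\row_j d (enum_val j)).
  by rewrite !mul_mx_diag; apply/matrixP => i j; rewrite !mxE.
by rewrite mxrankMfree // row_free_diag_mx.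
Qed.

(* Both [K1 *m B] and [K2 *m U] below span the vectors of [kermx A^T] that
   vanish on [T]; comparing their dimensions gives the formula. *)
Lemma rank_colS_ker p q n (A : 'M[F]_(p, n)) (B : 'M[F]_(q, n)) T :
  row_free B -> (B == kermx A^T)%MS ->
  (\rank (colS B T) + #|~: T| = q + \rank (colS A (~: T)))%N.
Proof.
move=> fB /andP[B_ker ker_B]; have BA : B *m A^T = 0 by apply/sub_kermxP.
rewrite !colSE; set E := selmx #|T| T; set U := selmx #|~: T| (~: T).
have UE : U *m E^T = 0 by rewrite selmx_mul_tr0 // setIC setICr.
have supp V : V *m E^T = 0 -> V = (V *m U^T) *m U.
  move=> VE; rewrite -mulmxA -{1}[V]mulmx1 -(selmx_tr_mul_addC _ T) -/E -/U.
  by rewrite mulmxDr !mulmxA VE mul0mx add0r.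
set K1 := kermx (B *m E^T); set K2 := kermx (U *m A^T).
have eqK : (K1 *m B == K2 *m U)%MS.
  apply/andP; split.
    have K1BE : K1 *m B *m E^T = 0 by rewrite -mulmxA mulmx_ker.
    rewrite (supp _ _ K1BE); apply: submxMr; apply/sub_kermxP.
    by rewrite mulmxA -(supp _ _ K1BE) -!mulmxA BA !mulmx0.
  have /submxP[X eX] : (K2 *m U <= B)%MS.
    by apply: submx_trans ker_B; apply/sub_kermxP; rewrite -mulmxA mulmx_ker.
  rewrite eX; apply: submxMr; apply/sub_kermxP.
  by rewrite mulmxA -eX -mulmxA UE mulmx0.
have fU : row_free U by exact: row_free_selmx.
have := eqmx_rank eqK; rewrite (mxrankMfree K1 fB) (mxrankMfree K2 fU) !mxrank_ker.
have -> : U *m A^T = (A *m U^T)^T by rewrite trmx_mul trmxK.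
rewrite mxrank_tr; have := rank_leq_row (B *m E^T); have := rank_leq_col (A *m U^T).
lia.
Qed.

End ColumnMinors.

Definition weight n (a : {set 'I_n}) : nat := \sum_(i in a) (i : nat).

Lemma sorted_enum_set n (a : {set 'I_n}) : sorted (fun x y : 'I_n => (x < y)%N) (enum a).
Proof.
rewrite /enum_mem -enumT /=; apply: sorted_filter; first by move=> x y z; apply: ltn_trans.
by have := iota_ltn_sorted 0 n; rewrite -val_enum_ord sorted_map.
Qed.

Lemma weight_add_setC n (a : {set 'I_n}) : (weight a + weight (~: a))%N = weight [set: 'I_n].
Proof. by rewrite /weight [RHS](big_setID a) setTI setTD. Qed.

Section AdjacentTranspositions.

Variables (n : nat) (j0 j1 : 'I_n).
Hypothesis j01 : val j1 = (val j0).+1.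
Local Notation t := (tperm j0 j1).

Lemma mem_tperm_imset (a : {set 'I_n}) x : (x \in t @: a) = (t x \in a).
Proof.
apply/imsetP/idP => [[y ya ->]|ta]; first by rewrite tpermK.
by exists (t x); rewrite ?tpermK.
Qed.

Lemma setC_tperm_imset (a : {set 'I_n}) : ~: (t @: a) = t @: ~: a.
Proof. by apply/setP => x; rewrite inE !mem_tperm_imset inE. Qed.

Lemma tperm_adjacent_ltn (x y : 'I_n) :
  (x < y)%N -> ~~ ((x == j0) && (y == j1)) -> (t x < t y)%N.
Proof.
have tE z : val (t z) =
    if val z == val j0 then val j1 else if val z == val j1 then val j0 else val z.
  rewrite !val_eqE; case: tpermP => [->|->|/eqP/negbTE-> /eqP/negbTE->]; rewrite ?eqxx //.
  by rewrite ifN // -val_eqE j01 neq_ltn ltnSn orbT.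
move: j01; rewrite -!val_eqE !tE /=; do ![case: eqP]; lia.
Qed.

Lemma enum_tperm_imset (a : {set 'I_n}) : ~~ ((j0 \in a) && (j1 \in a)) ->
  enum (t @: a) = map t (enum a).
Proof.
move=> j01a; apply: (@irr_sorted_eq _ (fun x y : 'I_n => (x < y)%N)).
- by move=> x y z; apply: ltn_trans.
- by move=> x /=; rewrite ltnn.
- exact: sorted_enum_set.
- apply: (homo_sorted_in (P := mem a)); last exact: sorted_enum_set.
    move=> x y xa ya xy; apply: tperm_adjacent_ltn => //.
    by apply: contra j01a => /andP[/eqP<- /eqP<-]; rewrite xa ya.
  by apply/allP => x; rewrite mem_enum.
- move=> x; rewrite mem_enum mem_tperm_imset -[in RHS](tpermK j0 j1 x).
  by rewrite mem_map ?mem_enum //; apply: perm_inj.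
Qed.

Lemma weight_tperm_imset (a : {set 'I_n}) : j0 \notin a -> j1 \in a ->
  (weight (t @: a)).+1 = weight a.
Proof.
move=> j0a j1a; rewrite /weight big_imset /=; last by move=> x y _ _; apply: perm_inj.
rewrite (bigD1 j1) // [RHS](bigD1 j1) //= tpermR j01 addSn; congr (_ + _).+1.
apply: eq_bigr => i /andP[ia ij1]; rewrite tpermD // eq_sym //.
by apply: contraNneq j0a => <-.
Qed.

End AdjacentTranspositions.

Lemma exists_ascent n (a : {set 'I_n}) (y x : 'I_n) : y \notin a -> x \in a -> (y < x)%N ->
  exists j0 j1 : 'I_n, [/\ val j1 = (val j0).+1, j0 \notin a & j1 \in a].
Proof.
move=> ya; suff ascent k (z : 'I_n) : val z = k -> z \in a -> (y < k)%N ->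
    exists j0 j1 : 'I_n, [/\ val j1 = (val j0).+1, j0 \notin a & j1 \in a].
  by move=> xa; apply: ascent.
elim: k z => // k IH z zk za; rewrite ltnS leq_eqVlt => /predU1P[yk|yk].
  by exists y, z; split; rewrite /= ?zk ?yk.
have kn : (k < n)%N by have := ltn_ord z; rewrite zk => /ltnW.
have [ka|ka] := boolP (Ordinal kn \in a); first exact: IH ka yk.
by exists (Ordinal kn), z.
Qed.

Section AdjacentMoveInvariance.

Variables (n : nat) (T : Type) (f : {set 'I_n} -> T).
Hypothesis f_move : forall (a : {set 'I_n}) (j0 j1 : 'I_n),
  val j1 = (val j0).+1 -> j0 \notin a -> j1 \in a -> f (tperm j0 j1 @: a) = f a.

(* Induction on [weight a + weight b]: if [a != b], some [y \in b :\: a] lies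
   below some [x \in a :\: b] (or vice versa), and [exists_ascent] yields a move
   lowering the weight of one of the two sets. *)
Lemma eq_card_move_invariant (a b : {set 'I_n}) : #|a| = #|b| -> f a = f b.
Proof.
move: (ltnSn (weight a + weight b)); move: {-1}(weight a + weight b).+1 => N.
elim: N a b => // N IH a b wab ab; have [-> //|neq] := eqVneq a b.
have [x xa xb] : exists2 x, x \in a & x \notin b.
  by apply/subsetPn; apply: contra neq => ab_sub; rewrite eqEcard ab_sub ab /=.
have [y yb ya] : exists2 y, y \in b & y \notin a.
  by apply/subsetPn; apply: contra neq => ba_sub; rewrite eq_sym eqEcard ba_sub ab /=.
clear neq; wlog yx : a b x y wab ab xa xb yb ya / (y < x)%N.
  move=> hw; have [yx|] := ltnP y x; first exact: (hw a b x y).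
  rewrite leq_eqVlt => /predU1P[/val_inj xy|xy]; first by rewrite xy yb in xb.
  by apply/esym; apply: (hw b a y x) => //; rewrite addnC.
have [j0 [j1 [j01 j0a j1a]]] := exists_ascent ya xa yx.
rewrite -(f_move j01 j0a j1a); apply: IH; last by rewrite card_imset //; apply: perm_inj.
by move: wab; rewrite -(weight_tperm_imset j01 j0a j1a) addSn ltnS.
Qed.

End AdjacentMoveInvariance.

Lemma selmx_tperm (F : fieldType) p n (a : {set 'I_n}) (j0 j1 : 'I_n) :
  val j1 = (val j0).+1 -> ~~ ((j0 \in a) && (j1 \in a)) ->
  selmx p (tperm j0 j1 @: a) = selmx p a *m perm_mx (tperm j0 j1) :> 'M[F]_(p, n).
Proof.
move=> j01 j01a; rewrite -[X in _ *m perm_mx X]tpermV -col_permE.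
apply/matrixP => i x; rewrite !mxE (enum_tperm_imset j01 j01a) mem_tperm_imset.
by rewrite -[x in index x _](tpermK j0 j1 x) index_map //; apply: perm_inj.
Qed.

Lemma card_setC_eq n p q (a : {set 'I_n}) : (p + q)%N = n -> #|a| = p -> #|~: a| = q.
Proof. by move=> pqn ha; apply/eqP; rewrite -(eqn_add2l p) -{1}ha cardsC card_ord pqn. Qed.

Definition shufmx (F : fieldType) p q (a : {set 'I_(p + q)}) : 'M[F]_(p + q) :=
  col_mx (selmx p a) (selmx q (~: a)).

Section ShuffleMatrix.

Variables (F : fieldType) (p q : nat).
Implicit Types (a b : {set 'I_(p + q)}).
Local Notation shufmx := (@shufmx F p q).

Lemma shufmx_mul_tr a : #|a| = p -> shufmx a *m (shufmx a)^T = 1%:M.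
Proof.
move=> ha; have hCa := card_setC_eq (erefl _) ha.
rewrite tr_col_mx mul_col_row !selmx_mul_tr1 // !selmx_mul_tr0 ?setICr //.
  by rewrite -scalar_mx_block.
by rewrite setIC setICr.
Qed.

Lemma det_shufmx_sqr a : #|a| = p -> \det (shufmx a) ^+ 2 = 1.
Proof. by move=> ha; rewrite expr2 -{2}det_tr -det_mulmx shufmx_mul_tr // det1. Qed.

Lemma det_col_mx_selmxC (A : 'M[F]_(p, p + q)) a : #|a| = p ->
  \det (col_mx A (selmx q (~: a))) = \det (shufmx a) * pluck A a.
Proof.
move=> ha; have hCa := card_setC_eq (erefl _) ha.
have <- : \det (col_mx A (selmx q (~: a))) * \det (shufmx a) = pluck A a.
  rewrite -[\det (shufmx a)]det_tr -det_mulmx tr_col_mx mul_col_row.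
  rewrite selmx_mul_tr1 // selmx_mul_tr0; last by rewrite setIC setICr.
  by rewrite det_ublock det1 mulr1 pluckE.
by rewrite mulrCA -expr2 det_shufmx_sqr // mulr1.
Qed.

Lemma det_col_selmx_mx (B : 'M[F]_(q, p + q)) a : #|a| = p ->
  \det (col_mx (selmx p a) B) = \det (shufmx a) * pluck B (~: a).
Proof.
move=> ha; have hCa := card_setC_eq (erefl _) ha.
have <- : \det (col_mx (selmx p a) B) * \det (shufmx a) = pluck B (~: a).
  rewrite -[\det (shufmx a)]det_tr -det_mulmx tr_col_mx mul_col_row.
  rewrite selmx_mul_tr1 // selmx_mul_tr0 ?setICr //.
  by rewrite det_lblock det1 mul1r pluckE.
by rewrite mulrCA -expr2 det_shufmx_sqr // mulr1.
Qed.

Lemma det_shufmx_neq0 a : #|a| = p -> \det (shufmx a) != 0.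
Proof.
move=> ha; apply/eqP => S0; have := det_shufmx_sqr ha.
by rewrite S0 expr0n => /eqP; rewrite eq_sym oner_eq0.
Qed.

Lemma shufmx_tperm a (j0 j1 : 'I_(p + q)) :
  val j1 = (val j0).+1 -> j0 \notin a -> j1 \in a ->
  shufmx (tperm j0 j1 @: a) = shufmx a *m perm_mx (tperm j0 j1).
Proof.
move=> j01 j0a j1a; rewrite /shufmx setC_tperm_imset.
rewrite !(selmx_tperm _ _ j01) ?mul_col_mx // ?inE ?j1a ?andbF //.
by rewrite (negbTE j0a).
Qed.

Lemma det_shufmx_sign a b : #|a| = p -> #|b| = p ->
  \det (shufmx a) * (-1) ^+ weight a = \det (shufmx b) * (-1) ^+ weight b.
Proof.
move=> ha hb; pose f a := \det (shufmx a) * (-1) ^+ weight a.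
apply: (eq_card_move_invariant (f := f)); last by rewrite ha hb.
move=> {ha hb}a j0 j1 j01 j0a j1a; rewrite /f.
have j0Nj1 : j0 != j1 by rewrite -val_eqE j01 ltn_eqF.
rewrite shufmx_tperm // det_mulmx det_perm odd_tperm j0Nj1 expr1.
by rewrite -(weight_tperm_imset j01 j0a j1a) exprS; ring.
Qed.

Lemma det_col_mx_mul (A D : 'M[F]_(p, p + q)) (B C : 'M[F]_(q, p + q)) : A *m B^T = 0 ->
  \det (col_mx A C) * \det (col_mx D B) = \det (A *m D^T) * \det (C *m B^T).
Proof.
move=> AB; rewrite -(det_tr (col_mx D B)) -det_mulmx tr_col_mx mul_col_row AB.
by rewrite det_lblock.
Qed.

Lemma pluck_ker_cross (A : 'M[F]_(p, p + q)) (B : 'M[F]_(q, p + q))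
    (a0 a : {set 'I_(p + q)}) :
  A *m B^T = 0 -> #|a0| = p -> #|a| = p ->
  \det (shufmx a0) * pluck A a0 * (\det (shufmx a) * pluck B (~: a))
  = pluck A a * pluck B (~: a0).
Proof.
move=> AB ha0 ha; have := det_col_mx_mul (selmx p a) (selmx q (~: a0)) AB.
rewrite det_col_mx_selmxC // det_col_selmx_mx // -pluckE mulrA => ->.
by rewrite -[selmx q _ *m _]trmxK trmx_mul trmxK det_tr -pluckE.
Qed.

Lemma pluck_ker_proportional (A : 'M[F]_(p, p + q)) (B : 'M[F]_(q, p + q)) :
  row_free A -> row_free B -> A *m B^T = 0 ->
  exists2 c, c != 0 & forall a, #|a| = p -> pluck B (~: a) * \det (shufmx a) = c * pluck A a.
Proof.
move=> fA fB AB; have [a0 ha0 pA0] := row_free_pluck_neq0 fA.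
have S0 := det_shufmx_neq0 ha0.
pose c := pluck B (~: a0) / (\det (shufmx a0) * pluck A a0).
have prop a : #|a| = p -> pluck B (~: a) * \det (shufmx a) = c * pluck A a.
  move=> ha; apply: (mulfI (mulf_neq0 S0 pA0)).
  by rewrite [pluck B _ * _]mulrC pluck_ker_cross // /c; field; rewrite pA0 S0.
exists c => //; have [b hb pBb] := row_free_pluck_neq0 fB.
have hCb : #|~: b| = p by apply: card_setC_eq hb; rewrite addnC.
have := prop _ hCb; rewrite setCK => pBbS.
apply: contraTneq (mulf_neq0 pBb (det_shufmx_neq0 hCb)) => c0.
by rewrite pBbS c0 mul0r eqxx.
Qed.

Lemma pluck_ker_signed (A : 'M[F]_(p, p + q)) (B : 'M[F]_(q, p + q)) :
  row_free A -> row_free B -> A *m B^T = 0 ->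
  exists2 c, c != 0 & forall a, #|a| = p ->
    pluck (B *m diag_mx (\row_i (-1) ^+ i)) (~: a) = c * pluck A a.
Proof.
move=> fA fB AB; have [c c0 prop] := pluck_ker_proportional fA fB AB.
have [a0 ha0 _] := row_free_pluck_neq0 fA.
set s := \det (shufmx a0) * (-1) ^+ weight a0.
have s0 : s != 0 by rewrite mulf_neq0 ?det_shufmx_neq0 ?expf_neq0 ?oppr_eq0 ?oner_eq0.
exists (c * (-1) ^+ weight [set: 'I_(p + q)] / s).
  by rewrite !mulf_neq0 ?invr_eq0 ?expf_neq0 ?oppr_eq0 ?oner_eq0.
move=> a ha; rewrite pluck_mul_diag ?(card_setC_eq (erefl _)) // prodrXr -/(weight _).
have sign_compl :
    (-1) ^+ weight (~: a) * s = (-1) ^+ weight [set: 'I_(p + q)] * \det (shufmx a).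
  rewrite /s -(det_shufmx_sign ha ha0) mulrCA -exprD (addnC (weight _)).
  by rewrite weight_add_setC mulrC.
apply: (mulIf s0); rewrite -[LHS]mulrA sign_compl mulrCA prop //.
by field.
Qed.

End ShuffleMatrix.

Lemma exists_pluck_dual (F : fieldType) p q n (A : 'M[F]_(p, n)) :
  (p + q)%N = n -> row_free A ->
  exists B : 'M[F]_(q, n), [/\ row_free B,
    exists2 c : F, c != 0 &
      forall a : {set 'I_n}, #|a| = p -> pluck B (~: a) = c * pluck A a &
    forall T, (\rank (colS B T) + #|~: T| = q + \rank (colS A (~: T)))%N].
Proof.
move=> pqn fA.
have [B /andP[fB B_ker]] : exists B : 'M[F]_(q, n), row_free B && (B == kermx A^T)%MS.
  have <- : \rank (kermx A^T) = q by rewrite mxrank_ker mxrank_tr (eqP fA) -pqn addKn.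
  by exists (row_base (kermx A^T)); rewrite row_base_free; apply/eqmxP/eq_row_base.
subst n.
have AB : A *m B^T = 0.
  by apply: trmx_inj; rewrite trmx_mul trmxK trmx0; apply/sub_kermxP; case/andP: B_ker.
have sign_neq0 (i : 'I_(p + q)) : (-1) ^+ i != 0 :> F.
  by rewrite expf_neq0 ?oppr_eq0 ?oner_eq0.
exists (B *m diag_mx (\row_i (-1) ^+ i)); split.
- by rewrite /row_free mxrankMfree ?row_free_diag_mx.
- exact: pluck_ker_signed.
- by move=> T; rewrite rank_colS_mul_diag // (rank_colS_ker _ fB B_ker).
Qed.

Lemma card_cyc_interval n alpha m : (m <= n)%N -> (0 < n)%N -> #|cyc_interval n alpha m| = m.
Proof.
move=> mn n0; pose g (j : 'I_m) := Ordinal (ltn_pmod (alpha + j) n0).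
have -> : cyc_interval n alpha m = g @: setT.
  apply/setP => i; rewrite inE; apply/existsP/imsetP => [[j /eqP ij]|[j _ ->]].
    by exists j => //; apply: val_inj.
  by exists j.
rewrite card_imset ?cardsT ?card_ord // => j1 j2 /(congr1 val) /= /eqP.
rewrite eqn_modDl !modn_small ?(leq_trans (ltn_ord _) mn) // => /eqP.
exact: val_inj.
Qed.

Theorem proposition3p15 (F : closedFieldType) (k n alpha m r : nat) :
  [pchar F] =i pred0 ->
  (1 <= k < n)%N -> (alpha <= n - 1)%N -> (1 <= m < n)%N -> (r < m)%N ->
  let S := cyc_interval n alpha m in
  let Sv := ~: S in
  let rv : int := (n%:Z - k%:Z - m%:Z + r%:Z)%R in
  (* phi(X_{S<=r}) is contained in X_{Sv<=rv} *)
  (forall A : 'M[F]_(k, n), row_free A -> inX S r%:Z A ->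
     exists B : 'M[F]_(n - k, n), [/\ row_free B, phi_rel A B & inX Sv rv B]) /\
  (* and every point of X_{Sv<=rv} is phi of a point of X_{S<=r} *)
  (forall B : 'M[F]_(n - k, n), row_free B -> inX Sv rv B ->
     exists A : 'M[F]_(k, n), [/\ row_free A, phi_rel A B & inX S r%:Z A]).
Proof.
move=> _ /andP[_ kn] _ /andP[_ mn] _ S Sv rv.
have cS : #|S| = m by apply: card_cyc_interval; lia.
have cSv : #|~: S| = (n - m)%N by apply: card_setC_eq cS; rewrite subnKC // ltnW.
rewrite /inX /rv /Sv; split.
- move=> A fA hA.
  have [B [fB phiAB rankB]] := exists_pluck_dual (q := n - k) (subnKC (ltnW kn)) fA.
  exists B; split => //; move: hA (rankB (~: S)); rewrite setCK; lia.
- move=> B fB hB.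
  have [A [fA [c c0 phiBA] rankA]] := exists_pluck_dual (q := k) (subnK (ltnW kn)) fB.
  exists A; split => //; last by move: hB (rankA S); lia.
  exists c^-1; rewrite ?invr_eq0 // => a ha.
  have hCa : #|~: a| = (n - k)%N by apply: card_setC_eq ha; rewrite subnKC // ltnW.
  by rewrite -[a in pluck A a]setCK phiBA ?mulKf.
Qed.
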